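(* Let $\mathcal{G}=(V,L)$ be a finite connected undirected graph with monitor set $M$ and non-monitor set $N=V\setminus M$, $\sigma=|N|$, with measurement paths given by Controllable Simple-path Probing (CSP). A set $S\subseteq N$ is $\sigma$-identifiable if and only if each node in $S$ is adjacent to at least two monitors.
   Context: Under CSP, the measurement paths $P$ are all simple paths (no repeated nodes) in $\mathcal{G}$ between two distinct monitors. A failure set is any $F\subseteq N$; a path fails iff it traverses a node of $F$. $P_F$ is the set of paths in $P$ traversing a node of $F$; $F_1,F_2$ distinguishable iff $P_{F_1}\ne P_{F_2}$. $S\subseteq N$ is $k$-identifiable if any two failure sets $F_1,F_2$ with $|F_1|,|F_2|\le k$ and $F_1\cap S\ne F_2\cap S$ are distinguishable. *)

From mathcomp Require Import all_boot.
Set Implicit Arguments. Unset Strict Implicit. Unset Printing Implicit Defensive.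

Section CSP.
Variables (T : finType) (e : rel T) (M : {set T}).

Definition nonmonitors : {set T} := ~: M.

Definition simple_path (p : seq T) : bool :=
  match p with
  | [::] => false
  | x :: q => path e x q && uniq p
  end.

(* CSP measurement paths: all simple paths between two distinct monitors
   (distinctness of the end points follows from uniq together with size >= 2). *)
Definition csp_path (p : seq T) : bool :=
  match p with
  | [::] => false
  | x :: q => [&& simple_path p, 0 < size q, x \in M & last x q \in M]
  end.

Definition failed_paths (F : {set T}) : pred (seq T) :=
  [pred p | csp_path p && has (mem F) p].

Definition distinguishable (F1 F2 : {set T}) : Prop :=
  ~ (failed_paths F1 =i failed_paths F2).

Definition k_identifiable (k : nat) (S : {set T}) : Prop :=
  forall F1 F2 : {set T},
    F1 \subset nonmonitors -> F2 \subset nonmonitors ->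
    #|F1| <= k -> #|F2| <= k ->
    F1 :&: S != F2 :&: S ->
    distinguishable F1 F2.

End CSP.

From mathcomp Require Import all_boot.

Set Implicit Arguments.
Unset Strict Implicit.
Unset Printing Implicit Defensive.

(* If s has two monitor neighbours m1 and m2, the measurement path m1 s m2
   fails exactly when s fails, so failure sets that differ at s are
   distinguished. Conversely, a non-monitor s on a measurement path is an
   interior vertex with two distinct path neighbours; if at most one of them
   can be a monitor, every path through s also meets another non-monitor, so
   failing all of N and failing N \ {s} fail the same paths. *)

Lemma setI_neq_witness (T : finType) (A B S : {set T}) :
  A :&: S != B :&: S -> exists2 s, s \in S & (s \in A) != (s \in B).
Proof.
move=> neqAB.
have [s /andP [sS sAB] | none] :=
  pickP [pred s | (s \in S) && ((s \in A) != (s \in B))]; first by exists s.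
case/eqP: neqAB; apply/setP => x; move: (none x); rewrite /= !inE.
by case: (x \in S); case: (x \in A); case: (x \in B).
Qed.

Section CSPPaths.
Variables (T : finType) (e : rel T) (M : {set T}).
Hypotheses (e_sym : symmetric e) (e_irr : irreflexive e).

Lemma csp_path_nonmonitor_neighbours (p : seq T) (s : T) :
  csp_path e M p -> s \in p -> s \notin M ->
  exists a b, [/\ a \in p, b \in p, a != b, e a s & e s b].
Proof.
case: p => [//|x0 q] /= /and4P [/andP [p_path p_uniq] _ x0M lastM].
rewrite inE => /orP [/eqP -> | sq]; first by rewrite x0M.
move=> sNM; case/splitPr: sq p_path p_uniq lastM => q1 q2.
rewrite cat_path => /and3P [_ e_as path_q2] p_uniq.
have : uniq ((x0 :: q1) ++ s :: q2) by [].
rewrite cat_uniq => /and3P [_ disj _].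
case: q2 path_q2 disj {p_uniq} => [_ _ | b q3 /andP [e_sb _] disj _].
  by rewrite last_cat /= (negbTE sNM).
have a_in := mem_last x0 q1.
exists (last x0 q1), b; split=> //.
- by rewrite -cat_cons mem_cat a_in.
- by rewrite -cat_cons mem_cat !inE eqxx !orbT.
- apply: contraNneq disj => ab; apply/hasP; exists b; first by rewrite !inE eqxx orbT.
  by rewrite -ab.
Qed.

Lemma csp_path_meets_other_nonmonitor (p : seq T) (s : T) :
  #|[set m in M | e s m]| <= 1 -> s \notin M ->
  csp_path e M p -> s \in p -> has (mem (nonmonitors M :\ s)) p.
Proof.
move=> few_monitors sNM p_csp sp.
have [a [b [ap bp ab e_as e_sb]]] := csp_path_nonmonitor_neighbours p_csp sp sNM.
have neq_s x : e s x -> x != s by apply: contraTneq => ->; rewrite e_irr.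
have [aM | aNM] := boolP (a \in M).
  have [bM | bNM] := boolP (b \in M).
    suff : 1 < #|[set m in M | e s m]| by rewrite ltnNge few_monitors.
    by apply/card_gt1P; exists a, b; rewrite !inE aM bM e_sb (e_sym s a) e_as.
  by apply/hasP; exists b; rewrite // !inE neq_s.
by apply/hasP; exists a; rewrite // !inE neq_s // e_sym.
Qed.

Lemma failed_paths_setD1_nonmonitor (s : T) :
  #|[set m in M | e s m]| <= 1 -> s \notin M ->
  failed_paths e M (nonmonitors M) =i failed_paths e M (nonmonitors M :\ s).
Proof.
move=> few_monitors sNM p; rewrite !inE.
have [p_csp | //] := boolP (csp_path e M p); rewrite /=.
apply/idP/idP; last by apply: sub_has => x /setD1P [].
case/hasP => x xp; have [xs _ | xs xNM] := eqVneq x s.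
  by rewrite xs in xp; apply: csp_path_meets_other_nonmonitor xp.
by apply/hasP; exists x => //; apply/setD1P.
Qed.

Lemma csp_path_through_monitor_neighbours (m1 s m2 : T) :
  m1 \in M -> m2 \in M -> m1 != m2 -> s \notin M ->
  e s m1 -> e s m2 -> csp_path e M [:: m1; s; m2].
Proof.
move=> m1M m2M m12 sNM e_s1 e_s2.
have neqM m : m \in M -> m != s by apply: contraTneq => ->.
by rewrite /= m1M m2M e_sym e_s1 e_s2 !inE negb_or m12 !neqM // eq_sym neqM.
Qed.

Lemma has_triple_between_monitors (F : {set T}) (m1 s m2 : T) :
  F \subset nonmonitors M -> m1 \in M -> m2 \in M ->
  has (mem F) [:: m1; s; m2] = (s \in F).
Proof.
move=> /subsetP FN m1M m2M.
have notF m : m \in M -> m \notin F by apply: contraTN => /FN; rewrite inE.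
by rewrite /= (negbTE (notF _ m1M)) (negbTE (notF _ m2M)) !orbF.
Qed.

End CSPPaths.

Theorem proposition3 (T : finType) (e : rel T)
  (e_sym : symmetric e) (e_irr : irreflexive e)
  (e_conn : forall x y : T, connect e x y)
  (M S : {set T}) (hS : S \subset nonmonitors M) :
  k_identifiable e M #|nonmonitors M| S <->
  (forall s, s \in S -> 2 <= #|[set m in M | e s m]|).
Proof.
have nonmonitorS s : s \in S -> s \notin M by move/(subsetP hS); rewrite inE.
split=> [identS s sS | two_monitors F1 F2 F1N F2N _ _ /setI_neq_witness].
- rewrite leqNgt ltnS; apply/negP => few_monitors.
  have sNM := nonmonitorS s sS.
  apply: (identS (nonmonitors M) (nonmonitors M :\ s)) => //.
  + exact: subD1set.
  + exact/subset_leq_card/subD1set.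
  + by apply/negP => /eqP /setP /(_ s); rewrite !inE eqxx sS sNM.
  + exact: failed_paths_setD1_nonmonitor.
case=> s sS sF12 same_failed.
have /card_gt1P [m1 [m2 [+ + m12]]] := two_monitors s sS.
rewrite !inE => /andP [m1M e_s1] /andP [m2M e_s2].
have p_csp := csp_path_through_monitor_neighbours e_sym m1M m2M m12
  (nonmonitorS s sS) e_s1 e_s2.
move: (same_failed [:: m1; s; m2]); rewrite !inE p_csp.
rewrite (has_triple_between_monitors _ F1N m1M m2M) (has_triple_between_monitors _ F2N m1M m2M).
by move=> /= sF; rewrite sF eqxx in sF12.
Qed.
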